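(* Let $\mathcal H$ be an $As^c$-$Mag$-bialgebra, $x\in\mathrm{Prim}\,\mathcal H$ and $y,z\in\bar{\mathcal H}$. Writing $\delta(z)=\sum z_{(1)}\otimes z_{(2)}$, one has $$\delta(as(x,y,z))=\sum as(x,y,z_{(1)})\otimes z_{(2)}.$$
   Context: An $As^c$-$Mag$-bialgebra is a vector space $\mathcal H$ over a field $\mathbb K$ with a bilinear product $\cdot$ (not assumed associative) with two-sided unit $1$ and a coassociative counital coproduct $\Delta$ with $\Delta(1)=1\otimes1$ and $\Delta(x\cdot y)=\Delta(x)\cdot(1\otimes y)+(x\otimes1)\cdot\Delta(y)-x\otimes y$, the product on $\mathcal H\otimes\mathcal H$ being componentwise. $\bar{\mathcal H}$ is the kernel of the counit, $\delta(x)=\Delta(x)-x\otimes1-1\otimes x$ is the reduced coproduct on $\bar{\mathcal H}$, and $\mathrm{Prim}\,\mathcal H=\ker\delta$. The associator is $as(x,y,z)=(x\cdot y)\cdot z-x\cdot(y\cdot z)$. *)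

From HB Require Import structures.
From mathcomp Require Import all_boot all_order all_algebra.
Set Implicit Arguments. Unset Strict Implicit. Unset Printing Implicit Defensive.
Import GRing.Theory.
Local Open Scope ring_scope.

(* Tensors in H (x) H are represented by finite formal sums
   [:: (a_1,b_1); ...; (a_n,b_n)] meaning sum_i a_i (x) b_i.  Two such
   representatives denote the same element of H (x) H iff every bilinear
   form phi : H x H -> K takes the same value on them (over a field,
   (H (x) H)^* = Bil(H,H;K) separates points).  Same for H (x) H (x) H. *)

Section Tensors.
Variables (K : fieldType) (H : lmodType K).

Definition bilinear_form (phi : H -> H -> K) : Prop :=
  (forall (a : K) (x y z : H), phi (a *: x + y) z = a * phi x z + phi y z) /\
  (forall (a : K) (x y z : H), phi z (a *: x + y) = a * phi z x + phi z y).

Definition trilinear_form (psi : H -> H -> H -> K) : Prop :=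
  (forall (a : K) (x y u v : H), psi (a *: x + y) u v = a * psi x u v + psi y u v) /\
  (forall (a : K) (x y u v : H), psi u (a *: x + y) v = a * psi u x v + psi u y v) /\
  (forall (a : K) (x y u v : H), psi u v (a *: x + y) = a * psi u v x + psi u v y).

Definition tev (phi : H -> H -> K) (t : seq (H * H)) : K :=
  \sum_(p <- t) phi p.1 p.2.

Definition tev3 (psi : H -> H -> H -> K) (t : seq (H * H * H)) : K :=
  \sum_(p <- t) psi p.1.1 p.1.2 p.2.

Definition teq (t t' : seq (H * H)) : Prop :=
  forall phi, bilinear_form phi -> tev phi t = tev phi t'.

Definition teq3 (t t' : seq (H * H * H)) : Prop :=
  forall psi, trilinear_form psi -> tev3 psi t = tev3 psi t'.

Variables (mul : H -> H -> H) (one : H) (Delta : H -> seq (H * H)) (eps : H -> K).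

Record AscMagBialgebra : Prop := {
  mul_linl : forall (a : K) (x y z : H), mul (a *: x + y) z = a *: mul x z + mul y z;
  mul_linr : forall (a : K) (x y z : H), mul z (a *: x + y) = a *: mul z x + mul z y;
  mul1x : forall x, mul one x = x;
  mulx1 : forall x, mul x one = x;
  Delta_lin : forall (a : K) (x y : H),
    teq (Delta (a *: x + y)) ([seq (a *: p.1, p.2) | p <- Delta x] ++ Delta y);
  eps_lin : forall (a : K) (x y : H), eps (a *: x + y) = a * eps x + eps y;
  Delta_coass : forall x,
    teq3 (flatten [seq [seq (q.1, q.2, p.2) | q <- Delta p.1] | p <- Delta x])
         (flatten [seq [seq (p.1, q.1, q.2) | q <- Delta p.2] | p <- Delta x]);
  counit_l : forall x, \sum_(p <- Delta x) eps p.1 *: p.2 = x;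
  counit_r : forall x, \sum_(p <- Delta x) eps p.2 *: p.1 = x;
  Delta_one : teq (Delta one) [:: (one, one)];
  Delta_mul : forall x y,
    teq (Delta (mul x y))
        ([seq (mul p.1 one, mul p.2 y) | p <- Delta x] ++
         [seq (mul x p.1, mul one p.2) | p <- Delta y] ++
         [:: (- x, y)])
}.

Definition rdelta (x : H) : seq (H * H) :=
  Delta x ++ [:: (- x, one); (- one, x)].

Definition in_barH (x : H) : Prop := eps x = 0.

Definition is_prim (x : H) : Prop := in_barH x /\ teq (rdelta x) [::].

Definition assoc3 (x y z : H) : H := mul (mul x y) z - mul x (mul y z).

End Tensors.

(* For primitive x the derivation rule for Delta collapses to
   Delta(x w) = 1 (x) x w + (x (x) 1) Delta(w).  Expanding Delta((x y) z) and
   Delta(x (y z)) with it (and with the derivation rule for Delta(y z)), the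
   terms sum x y_(1) (x) y_(2) z and - x y (x) z occur in both and cancel, so
   Delta(as(x,y,z)) = 1 (x) as(x,y,z) + sum as(x,y,z_(1)) (x) z_(2).  Removing
   as(x,y,z) (x) 1 + 1 (x) as(x,y,z) from both sides, and using that as(x,y,-)
   is linear and kills 1, gives the formula for delta.

   A tensor identity is checked by pairing both sides with an arbitrary
   bilinear form phi; multiplying a tensor factor by a fixed element then
   amounts to composing phi with a linear map. *)

From mathcomp Require Import all_boot all_order all_algebra.
From mathcomp Require Import ring.
Set Implicit Arguments. Unset Strict Implicit. Unset Printing Implicit Defensive.
Import GRing.Theory.
Local Open Scope ring_scope.

Section LinearFor.
Variables (R : pzRingType) (U : lmodType R) (V : zmodType).
Variables (s : GRing.Scale.law R V) (f : U -> V).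
Hypothesis f_lin : linear_for s f.

Lemma linear_forB x y : f (x - y) = f x - f y.
Proof. exact: (zmod_morphism_linear f_lin). Qed.

Lemma linear_forZ a x : f (a *: x) = s a (f x).
Proof. exact: (scalable_linear f_lin). Qed.

Lemma linear_for0 : f 0 = 0.
Proof. by rewrite -[X in f X](subrr 0) linear_forB subrr. Qed.

Lemma linear_forN x : f (- x) = - f x.
Proof. by rewrite -[- x]sub0r linear_forB linear_for0 sub0r. Qed.

End LinearFor.

Section BilinearForms.
Variables (K : fieldType) (H : lmodType K) (phi : H -> H -> K).
Hypothesis phi_bil : bilinear_form phi.

Lemma bilinear_form_scalarl z : scalar (phi^~ z).
Proof. by move=> a x y; case: phi_bil => phil _; exact: phil. Qed.

Lemma bilinear_form_scalarr z : scalar (phi z).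
Proof. by move=> a x y; case: phi_bil => _ phir; exact: phir. Qed.

Lemma bilinear_form_comp (f g : H -> H) :
  linear f -> linear g -> bilinear_form (fun a b => phi (f a) (g b)).
Proof.
by move=> f_lin g_lin; split=> a x y z;
  rewrite ?f_lin ?g_lin (bilinear_form_scalarl, bilinear_form_scalarr).
Qed.

Lemma tev_rdelta (one : H) (Delta : H -> seq (H * H)) u :
  tev phi (rdelta one Delta u) = tev phi (Delta u) - phi u one - phi one u.
Proof.
rewrite /tev /rdelta big_cat !big_cons big_nil /= addr0.
by rewrite !(linear_forN (bilinear_form_scalarl _)) addrA.
Qed.

End BilinearForms.

Section AscMagBialgebra.
Variables (K : fieldType) (H : lmodType K) (mul : H -> H -> H) (one : H).
Variables (Delta : H -> seq (H * H)) (eps : H -> K).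
Hypothesis HB : AscMagBialgebra mul one Delta eps.

Lemma linear_mull v : linear (mul^~ v).
Proof. by move=> a x y; rewrite (mul_linl HB). Qed.

Lemma linear_mulr u : linear (mul u).
Proof. by move=> a x y; rewrite (mul_linr HB). Qed.

Lemma linear_assoc3 x y : linear (assoc3 mul x y).
Proof.
by move=> a u v; rewrite /assoc3 !linear_mulr scalerBr opprD addrACA.
Qed.

Lemma assoc3_unitr x y : assoc3 mul x y one = 0.
Proof. by rewrite /assoc3 !(mulx1 HB) subrr. Qed.

Lemma scalar_tev_Delta phi :
  bilinear_form phi -> scalar (fun u => tev phi (Delta u)).
Proof.
move=> phi_bil a u v; rewrite (Delta_lin HB _ _ _ phi_bil) /tev big_cat big_map /=.
under eq_bigr do rewrite (linear_forZ (bilinear_form_scalarl phi_bil _)).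
by rewrite -mulr_sumr.
Qed.

Lemma tev_Delta_mul phi u v : bilinear_form phi ->
  tev phi (Delta (mul u v)) = tev (fun a b => phi a (mul b v)) (Delta u)
     + tev (fun a b => phi (mul u a) b) (Delta v) - phi u v.
Proof.
move=> phi_bil; rewrite (Delta_mul HB u v phi_bil) /tev !big_cat !big_map /=.
rewrite big_cons big_nil addr0 (linear_forN (bilinear_form_scalarl phi_bil _)).
under eq_bigr do rewrite (mulx1 HB).
by under [X in _ + (X + _)]eq_bigr do rewrite (mul1x HB); rewrite addrA.
Qed.

Lemma tev_Delta_prim phi x : is_prim one Delta eps x -> bilinear_form phi ->
  tev phi (Delta x) = phi x one + phi one x.
Proof.
case=> _ x_prim phi_bil; have /eqP := x_prim phi phi_bil.
by rewrite tev_rdelta // [tev _ [::]]big_nil -addrA -opprD subr_eq0 => /eqP.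
Qed.

Lemma Delta_prim_mul x v : is_prim one Delta eps x ->
  teq (Delta (mul x v)) ((one, mul x v) :: [seq (mul x p.1, p.2) | p <- Delta v]).
Proof.
move=> x_prim phi phi_bil; rewrite [RHS]big_cons big_map /=.
rewrite tev_Delta_mul // tev_Delta_prim //; last first.
  exact: bilinear_form_comp (linear_mull v).
by rewrite (mul1x HB) addrAC (addrAC (phi x v)) subrr add0r.
Qed.

Lemma Delta_assoc3_prim x y z : is_prim one Delta eps x ->
  teq (Delta (assoc3 mul x y z))
      ((one, assoc3 mul x y z) :: [seq (assoc3 mul x y p.1, p.2) | p <- Delta z]).
Proof.
move=> x_prim phi phi_bil; rewrite [RHS]big_cons big_map /=.
have phi_mul2 u : bilinear_form (fun a b => phi a (mul b u)).
  exact: bilinear_form_comp (linear_mull u).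
have phi_mul1 u : bilinear_form (fun a b => phi (mul u a) b).
  exact: bilinear_form_comp (linear_mulr u) _.
pose S := tev (fun a b => phi (mul x a) (mul b z)) (Delta y).
have Delta_xy_z : tev phi (Delta (mul (mul x y) z)) = phi one (mul (mul x y) z) + S
    + tev (fun a b => phi (mul (mul x y) a) b) (Delta z) - phi (mul x y) z.
  rewrite tev_Delta_mul // (Delta_prim_mul y x_prim (phi_mul2 z)).
  by rewrite /tev big_cons big_map.
have Delta_x_yz : tev phi (Delta (mul x (mul y z))) = phi one (mul x (mul y z)) + S
    + tev (fun a b => phi (mul x (mul y a)) b) (Delta z) - phi (mul x y) z.
  rewrite (Delta_prim_mul (mul y z) x_prim phi_bil) [LHS]big_cons big_map.
  by rewrite /= -/(tev (fun a b => phi (mul x a) b) _) tev_Delta_mul // !addrA.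
rewrite /assoc3 (linear_forB (scalar_tev_Delta phi_bil)) Delta_xy_z Delta_x_yz.
rewrite (linear_forB (bilinear_form_scalarr phi_bil _)).
under [X in _ = _ + X]eq_bigr
  do rewrite (linear_forB (bilinear_form_scalarl phi_bil _)).
rewrite sumrB -/(tev (fun a b => phi (mul (mul x y) a) b) _).
rewrite -/(tev (fun a b => phi (mul x (mul y a)) b) _).
ring.
Qed.

End AscMagBialgebra.

Theorem lemma2p7 (K : fieldType) (H : lmodType K) (mul : H -> H -> H) (one : H)
  (Delta : H -> seq (H * H)) (eps : H -> K) :
  AscMagBialgebra mul one Delta eps ->
  forall x y z : H,
    is_prim one Delta eps x -> in_barH eps y -> in_barH eps z ->
    teq (rdelta one Delta (assoc3 mul x y z))
        [seq (assoc3 mul x y p.1, p.2) | p <- rdelta one Delta z].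
Proof.
move=> HB x y z x_prim _ _ phi phi_bil.
have phi_as3 : bilinear_form (fun a b => phi (assoc3 mul x y a) b).
  exact: bilinear_form_comp (linear_assoc3 HB x y) _.
rewrite tev_rdelta // (Delta_assoc3_prim HB y z x_prim phi_bil).
rewrite [tev _ (_ :: _)]big_cons [RHS]big_map /= big_map.
rewrite -!/(tev (fun a b => phi (assoc3 mul x y a) b) _) tev_rdelta //.
rewrite (assoc3_unitr HB) (linear_for0 (bilinear_form_scalarl phi_bil _)) subr0.
by rewrite addrAC [phi one _ + _]addrC addrK.
Qed.
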